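(* Let $W$ be a real symmetric non-negative $n\times n$ matrix with zero diagonal and $\beta\ge0$. If $I+\beta W$ is positive definite, then for every $z\in\mathbb{C}^n$ the function $x\mapsto D_{\beta,W}(x;z)$ has a unique minimizer over $\mathbb{C}^n$.
   Context: For $x\in\mathbb{C}^n$, $|x|$ denotes the vector of magnitudes, $\|x\|_1=\sum_i|x_i|$, $P_W(x)=\|x\|_1+\frac12\sum_{i,j}w_{i,j}|x_ix_j|=\|x\|_1+\frac12|x|^TW|x|$, and $D_{\beta,W}(x;z)=\frac12\|z-x\|_2^2+\beta P_W(x)$. *)

From Stdlib Require Import Reals.
From mathcomp Require Import all_boot.
Set Implicit Arguments. Unset Strict Implicit. Unset Printing Implicit Defensive.
Open Scope R_scope.

(* A complex number is represented by its (real part, imaginary part). *)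
Definition C := (R * R)%type.
Definition cmod (z : C) : R := sqrt (fst z ^ 2 + snd z ^ 2).
Definition csub (z w : C) : C := (fst z - fst w, snd z - snd w).

Definition cvec (n : nat) := 'I_n -> C.
Definition rmat (n : nat) := 'I_n -> 'I_n -> R.

Definition rsum (n : nat) (f : 'I_n -> R) : R := \big[Rplus/0]_(i < n) f i.

Definition norm1 (n : nat) (x : cvec n) : R := rsum (fun i => cmod (x i)).
Definition norm2sq (n : nat) (x : cvec n) : R := rsum (fun i => cmod (x i) ^ 2).

Definition PW (n : nat) (W : rmat n) (x : cvec n) : R :=
  norm1 x + / 2 * rsum (fun i => rsum (fun j => W i j * (cmod (x i) * cmod (x j)))).

Definition DbW (n : nat) (beta : R) (W : rmat n) (x z : cvec n) : R :=
  / 2 * norm2sq (fun i => csub (z i) (x i)) + beta * PW W x.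

Definition sym_mat (n : nat) (W : rmat n) : Prop := forall i j, W i j = W j i.
Definition nonneg_mat (n : nat) (W : rmat n) : Prop := forall i j, 0 <= W i j.
Definition zero_diag (n : nat) (W : rmat n) : Prop := forall i, W i i = 0.

Definition id_plus_scale (n : nat) (beta : R) (W : rmat n) : rmat n :=
  fun i j => (if i == j then 1 else 0) + beta * W i j.
Definition pos_def (n : nat) (M : rmat n) : Prop :=
  forall v : 'I_n -> R, (exists i, v i <> 0) ->
    0 < rsum (fun i => rsum (fun j => v i * M i j * v j)).

(* Since P_W only sees the magnitudes |x_i| and |z_i - x_i| >= ||z_i| - |x_i|| with equality
   exactly when x_i is a nonnegative multiple of z_i, D_{beta,W}(x; z) is bounded below by the real
   problem Dmag(|x|; |z|) = 1/2 || |z| - |x| ||^2 + beta P_W(|x|), with equality when x carries the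
   phases of z.  On the orthant r >= 0, Dmag(.; |z|) is continuous and coercive, hence has a
   minimiser, and its midpoint second difference is 1/4 (c - r)^T (I + beta W) (c - r), so positive
   definiteness makes it strictly convex and the minimiser unique.  A minimiser of D must therefore
   have these magnitudes and the phases of z; where z_i = 0 the minimiser vanishes, because W >= 0
   makes it profitable to drop r_i. *)

From Stdlib Require Import Reals Lra Psatz FunctionalExtensionality.
From mathcomp Require Import all_boot all_order all_algebra.
From mathcomp Require Import all_classical all_reals all_analysis.
From mathcomp Require Import Rstruct Rstruct_topology.
Set Implicit Arguments. Unset Strict Implicit. Unset Printing Implicit Defensive.
Import Order.TTheory.
Import ArrowAsProduct numFieldNormedType.Exports.

Section ContinuityCombinators.
Variables (K : numFieldType) (T : topologicalType).
Implicit Types f g : T -> K.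
Local Open Scope ring_scope.

Lemma continuous_add f g :
  continuous f -> continuous g -> continuous (fun x => f x + g x).
Proof. by move=> cf cg x; exact: (continuousD (cf x) (cg x)). Qed.

Lemma continuous_sub f g :
  continuous f -> continuous g -> continuous (fun x => f x - g x).
Proof. by move=> cf cg x; exact: (continuousB (cf x) (cg x)). Qed.

Lemma continuous_mul f g :
  continuous f -> continuous g -> continuous (fun x => f x * g x).
Proof. by move=> cf cg x; exact: (continuousM (cf x) (cg x)). Qed.

Lemma continuous_sum n (F : 'I_n -> T -> K) :
  (forall i, continuous (F i)) -> continuous (fun x => \sum_(i < n) F i x).
Proof. by move=> cF; apply: continuous_big => //; exact: add_continuous. Qed.
End ContinuityCombinators.

Section BoxArgmin.
Local Open Scope ring_scope.

Lemma continuous_argmin_box (K : realType) n (f : ('I_n -> K) -> K) (M : K) :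
  0 <= M -> continuous f ->
  exists2 r : 'I_n -> K, (forall i, 0 <= r i <= M) &
    forall s, (forall i, 0 <= s i <= M) -> f r <= f s.
Proof.
move=> M0 cf; set box := [set r : 'I_n -> K | forall i, `[0, M]%classic (r i)]%classic.
have box_compact : compact box.
  by apply: (@tychonoff _ (fun=> K) (fun=> `[0, M]%classic)) => i; exact: segment_compact.
have box0 : (box !=set0)%classic by exists (fun=> 0) => i /=; rewrite in_itv /= lexx M0.
have [r /[!inE] r_box r_min] := compact_EVT_min box0 box_compact (continuous_subspaceT cf).
exists r => [i|s s_box]; first by have := r_box i; rewrite /= in_itv.
by apply: r_min; rewrite inE => i /=; rewrite in_itv; exact: s_box.
Qed.
End BoxArgmin.

Open Scope R_scope.

Section RealSums.
Variable n : nat.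
Implicit Types f g h d : 'I_n -> R.

Lemma eq_rsum f g : (forall i, f i = g i) -> rsum f = rsum g.
Proof. by move=> fg; apply: eq_bigr => i _. Qed.

Lemma rsumD f g : rsum (fun i => f i + g i) = rsum f + rsum g.
Proof. exact: big_split. Qed.

Lemma rsumZ c f : rsum (fun i => c * f i) = c * rsum f.
Proof. by rewrite /rsum big_distrr. Qed.

Lemma rsumB f g : rsum (fun i => f i - g i) = rsum f - rsum g.
Proof.
rewrite (eq_rsum (g := fun i => f i + -1 * g i)) => [|i]; last ring.
by rewrite rsumD rsumZ; ring.
Qed.

Lemma rsum_second_diff f g h d :
  (forall i, f i + g i - 2 * h i = d i) -> rsum f + rsum g - 2 * rsum h = rsum d.
Proof. by move/eq_rsum <-; rewrite rsumB rsumD rsumZ. Qed.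

Lemma rsum0 : rsum (fun _ : 'I_n => 0) = 0.
Proof. exact: big1_eq. Qed.

Lemma rsum_le f g : (forall i, f i <= g i) -> rsum f <= rsum g.
Proof. by move=> fg; apply: (big_ind2 Rle) => *; [lra | lra | exact: fg]. Qed.

Lemma rsum_ge0 f : (forall i, 0 <= f i) -> 0 <= rsum f.
Proof. by move=> f0; apply: (big_ind (Rle 0)) => *; [lra | lra | exact: f0]. Qed.

Lemma rsum_ge_term f (k : 'I_n) : (forall i, 0 <= f i) -> f k <= rsum f.
Proof.
move=> f0; rewrite /rsum (bigD1 k) //= -[X in X <= _]Rplus_0_r.
by apply: Rplus_le_compat_l; apply: (big_ind (Rle 0)) => *; [lra | lra | exact: f0].
Qed.

Lemma rsum_lt f g (k : 'I_n) : (forall i, f i <= g i) -> f k < g k -> rsum f < rsum g.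
Proof.
move=> fg fgk; have gf0 i : 0 <= g i - f i by have := fg i; lra.
by have := rsum_ge_term k gf0; rewrite rsumB; lra.
Qed.

Lemma rsum_delta (k : 'I_n) f : rsum (fun j => if k == j then f j else 0) = f k.
Proof.
rewrite /rsum (bigD1 k) //= eqxx big1 => [|j /negbTE]; first ring.
by rewrite eq_sym => ->.
Qed.
End RealSums.

Definition cscale (c : R) (w : R * R) : R * R := (c * fst w, c * snd w).
Definition cdot (w x : R * R) : R := fst w * fst x + snd w * snd x.
(* The value of [r / cmod w] at [w = 0] does not matter: it scales the zero vector. *)
Definition cpolar (r : R) (w : R * R) : R * R := cscale (r / cmod w) w.

Lemma cmod_ge0 w : 0 <= cmod w.
Proof. exact: sqrt_pos. Qed.

Lemma cmod_sq w : cmod w ^ 2 = fst w ^ 2 + snd w ^ 2.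
Proof. by rewrite /cmod pow2_sqrt //; nra. Qed.

Lemma cmod_eq0 w : cmod w = 0 -> w = (0, 0).
Proof.
move=> w0; have := cmod_sq w; rewrite w0; case: w {w0} => [w1 w2] /= ww.
by f_equal; nra.
Qed.

Lemma cmod_cscale_sq c w : cmod (cscale c w) ^ 2 = c ^ 2 * cmod w ^ 2.
Proof. by rewrite !cmod_sq /=; ring. Qed.

Lemma cmod_csub_sq w x : cmod (csub w x) ^ 2 = cmod w ^ 2 + cmod x ^ 2 - 2 * cdot w x.
Proof. by rewrite !cmod_sq /=; rewrite /cdot; ring. Qed.

Lemma cdot_le_cmod w x : cdot w x <= cmod w * cmod x.
Proof.
have lagrange : cdot w x ^ 2 + (fst w * snd x - snd w * fst x) ^ 2 = (cmod w * cmod x) ^ 2.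
  by rewrite Rpow_mult_distr !cmod_sq /cdot; ring.
have := Rmult_le_pos _ _ (cmod_ge0 w) (cmod_ge0 x).
have := pow2_ge_0 (fst w * snd x - snd w * fst x); nra.
Qed.

Lemma cmod_csub_ge w x : (cmod w - cmod x) ^ 2 <= cmod (csub w x) ^ 2.
Proof. by rewrite cmod_csub_sq; have := cdot_le_cmod w x; nra. Qed.

Lemma cdot_eq_cmod w x :
  cdot w x = cmod w * cmod x -> cscale (cmod w) x = cscale (cmod x) w.
Proof.
move=> wx.
have [e1 e2] : cmod w * fst x - cmod x * fst w = 0 /\ cmod w * snd x - cmod x * snd w = 0.
  apply: Rplus_sqr_eq_0; rewrite /Rsqr.
  transitivity (cmod w ^ 2 * (fst x ^ 2 + snd x ^ 2) + cmod x ^ 2 * (fst w ^ 2 + snd w ^ 2)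
                - 2 * (cmod w * cmod x) * cdot w x).
    by rewrite /cdot; ring.
  by rewrite -!cmod_sq wx; ring.
by rewrite /cscale; f_equal; lra.
Qed.

Lemma cmod_cpolar r w : 0 <= r -> (cmod w = 0 -> r = 0) -> cmod (cpolar r w) = r.
Proof.
move=> r0 w0r; have : cmod (cpolar r w) ^ 2 = r ^ 2.
  rewrite cmod_cscale_sq; have [w0|nz] := Req_dec (cmod w) 0; last by field.
  by rewrite w0 (w0r w0); ring.
by have := cmod_ge0 (cpolar r w); nra.
Qed.

Lemma cmod_csub_cpolar r w :
  (cmod w = 0 -> r = 0) -> cmod (csub w (cpolar r w)) ^ 2 = (cmod w - r) ^ 2.
Proof.
move=> w0r; have -> : csub w (cpolar r w) = cscale (1 - r / cmod w) w.
  by rewrite /csub /cpolar /cscale /=; f_equal; ring.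
rewrite cmod_cscale_sq; have [w0|nz] := Req_dec (cmod w) 0; last by field.
by rewrite w0 (w0r w0); ring.
Qed.

Lemma cpolar_of_cmod_csub w x :
  cmod (csub w x) ^ 2 = (cmod w - cmod x) ^ 2 -> (cmod w = 0 -> cmod x = 0) ->
  x = cpolar (cmod x) w.
Proof.
move=> tight w0x; have [w0|nz] := Req_dec (cmod w) 0.
  by rewrite /cpolar /cscale /Rdiv (w0x w0) (cmod_eq0 (w0x w0)) /=; f_equal; ring.
have /cdot_eq_cmod : cdot w x = cmod w * cmod x.
  by move: tight; rewrite cmod_csub_sq; nra.
case: x {tight w0x} => x1 x2; rewrite /cpolar /cscale /= => -[e1 e2].
by f_equal; field_simplify_eq => //; lra.
Qed.

Definition cmods n (x : cvec n) : 'I_n -> R := fun i => cmod (x i).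

Definition Pmag n (W : rmat n) (r : 'I_n -> R) : R :=
  rsum r + / 2 * rsum (fun i => rsum (fun j => W i j * (r i * r j))).

Definition Dmag n (beta : R) (W : rmat n) (r a : 'I_n -> R) : R :=
  / 2 * rsum (fun i => (a i - r i) ^ 2) + beta * Pmag W r.

Definition qform n (M : rmat n) (v : 'I_n -> R) : R :=
  rsum (fun i => rsum (fun j => v i * M i j * v j)).

Section MagnitudeReduction.
Variables (n : nat) (beta : R) (W : rmat n) (z : cvec n).

(* The penalties cancel because [PW W x] is [Pmag W (cmods x)] by conversion. *)
Lemma DbW_sub_Dmag x : DbW beta W x z - Dmag beta W (cmods x) (cmods z) =
  / 2 * (rsum (fun i => cmod (csub (z i) (x i)) ^ 2)
         - rsum (fun i => (cmod (z i) - cmod (x i)) ^ 2)).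
Proof.
rewrite /DbW /Dmag /norm2sq; change (PW W x) with (Pmag W (cmods x)); rewrite /cmods /=; ring.
Qed.

Lemma DbW_ge_Dmag x : Dmag beta W (cmods x) (cmods z) <= DbW beta W x z.
Proof.
have := rsum_le (fun i => cmod_csub_ge (z i) (x i)); have := DbW_sub_Dmag x; lra.
Qed.

Lemma DbW_cpolar r : (forall i, 0 <= r i) -> (forall i, cmod (z i) = 0 -> r i = 0) ->
  DbW beta W (fun i => cpolar (r i) (z i)) z = Dmag beta W r (cmods z).
Proof.
move=> r0 zr; set x := fun i => cpolar (r i) (z i).
have cmods_x : cmods x = r.
  by apply: functional_extensionality => i; exact: cmod_cpolar (r0 i) (zr i).
rewrite -cmods_x; apply: Rminus_diag_uniq; rewrite DbW_sub_Dmag.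
rewrite (eq_rsum (g := fun i => (cmod (z i) - cmod (x i)) ^ 2)) => [|i]; first ring.
by rewrite [cmod (x i)](cmod_cpolar (r0 i) (zr i)); exact: cmod_csub_cpolar (zr i).
Qed.

Lemma DbW_le_Dmag_tight x : DbW beta W x z <= Dmag beta W (cmods x) (cmods z) ->
  forall i, cmod (csub (z i) (x i)) ^ 2 = (cmod (z i) - cmod (x i)) ^ 2.
Proof.
move=> le_D i; apply: Rle_antisym; last exact: cmod_csub_ge.
apply: Rnot_lt_le => lt_i.
have := rsum_lt (fun j => cmod_csub_ge (z j) (x j)) lt_i; have := DbW_sub_Dmag x; lra.
Qed.
End MagnitudeReduction.

Definition orthant_argmin n (f : ('I_n -> R) -> R) (r : 'I_n -> R) : Prop :=
  (forall i, 0 <= r i) /\ forall s, (forall i, 0 <= s i) -> f r <= f s.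

Lemma orthant_argmin_coercive n (f : ('I_n -> R) -> R) (M : R) : 0 <= M -> continuous f ->
  (forall s, (forall i, 0 <= s i) -> (exists k, M < s k) -> f (fun=> 0) <= f s) ->
  exists r, orthant_argmin f r.
Proof.
move=> M0 cf coercive; have [r r_box r_min] := continuous_argmin_box (introT RleP M0) cf.
have in_box s : (forall i, 0 <= s i <= M) -> f r <= f s.
  move=> s_box; apply/RleP; apply: r_min => i.
  by have [? ?] := s_box i; apply/andP; split; apply/RleP.
exists r; split=> [i | s s0]; first by have /andP[/RleP] := r_box i.
have [[k Mk] | s_box] := pselect (exists k, M < s k).
  apply: Rle_trans (coercive s s0 (ex_intro _ k Mk)).
  by apply: in_box => i; lra.
by apply: in_box => i; split; [exact: s0 | apply: Rnot_lt_le => Ms; apply: s_box; exists i].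
Qed.

Section MagnitudeProblem.
Variables (n : nat) (beta : R) (W : rmat n).
Implicit Types a c r s : 'I_n -> R.

Lemma qform_id_plus_scale d : qform (id_plus_scale beta W) d =
  rsum (fun i => d i ^ 2) + beta * rsum (fun i => rsum (fun j => W i j * (d i * d j))).
Proof.
rewrite /qform -rsumZ -rsumD; apply: eq_rsum => i.
rewrite (eq_rsum (g := fun j =>
    (if i == j then d i * d j else 0) + beta * (W i j * (d i * d j)))) => [|j].
  by rewrite rsumD rsum_delta rsumZ; ring.
by rewrite /id_plus_scale; case: (i == j); ring.
Qed.

Lemma Dmag_second_diff a c r :
  Dmag beta W c a + Dmag beta W r a - 2 * Dmag beta W (fun i => (c i + r i) / 2) a =
  / 4 * qform (id_plus_scale beta W) (fun i => c i - r i).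
Proof.
set m := fun i => (c i + r i) / 2; set d := fun i => c i - r i.
have fit : rsum (fun i => (a i - c i) ^ 2) + rsum (fun i => (a i - r i) ^ 2)
    - 2 * rsum (fun i => (a i - m i) ^ 2) = / 2 * rsum (fun i => d i ^ 2).
  by rewrite -[in RHS]rsumZ; apply: rsum_second_diff => i; rewrite /m /d; field.
have lin : rsum c + rsum r - 2 * rsum m = 0.
  by rewrite -(rsum0 n); apply: rsum_second_diff => i; rewrite /m; field.
have quad : rsum (fun i => rsum (fun j => W i j * (c i * c j)))
    + rsum (fun i => rsum (fun j => W i j * (r i * r j)))
    - 2 * rsum (fun i => rsum (fun j => W i j * (m i * m j)))
    = / 2 * rsum (fun i => rsum (fun j => W i j * (d i * d j))).
  rewrite -[in RHS]rsumZ; apply: rsum_second_diff => i.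
  by rewrite -[in RHS]rsumZ; apply: rsum_second_diff => j; rewrite /m /d; field.
rewrite qform_id_plus_scale /Dmag /Pmag; nra.
Qed.

Lemma Dmag_argmin_unique a r c : pos_def (id_plus_scale beta W) ->
  orthant_argmin (fun r => Dmag beta W r a) r -> (forall i, 0 <= c i) ->
  Dmag beta W c a <= Dmag beta W r a -> forall i, c i = r i.
Proof.
move=> pd [r0 r_min] c0 cr i; have [// | ne] := Req_dec (c i) (r i).
have pos : 0 < qform (id_plus_scale beta W) (fun j => c j - r j).
  by apply: pd; exists i; lra.
have m0 j : 0 <= (c j + r j) / 2 by have := c0 j; have := r0 j; lra.
have := r_min _ m0; have := Dmag_second_diff a c r; lra.
Qed.

Lemma Dmag_continuous a : continuous (fun r => Dmag beta W r a).
Proof.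
have coord i : continuous (fun r : 'I_n -> R => r i).
  exact: (@proj_continuous _ (fun=> R) i).
have cst (x : R) : continuous (fun _ : 'I_n -> R => x) by exact: cst_continuous.
have sq f : continuous f -> continuous (fun r : 'I_n -> R => f r ^ 2).
  by move=> cf; apply: continuous_mul cf (continuous_mul cf (cst 1)).
apply: continuous_add; apply: continuous_mul (cst _) _.
  by apply: continuous_sum => i; apply/sq/continuous_sub; [exact: cst | exact: coord].
apply: continuous_add; first exact: continuous_sum coord.
apply: continuous_mul (cst _) _; apply: continuous_sum => i; apply: continuous_sum => j.
exact: continuous_mul (cst _) (continuous_mul (coord i) (coord j)).
Qed.

Hypotheses (beta0 : 0 <= beta) (W0 : nonneg_mat W).

Lemma Pmag_le s r : (forall i, 0 <= s i <= r i) -> Pmag W s <= Pmag W r.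
Proof.
move=> sr; have s0 i := proj1 (sr i); have le_sr i := proj2 (sr i).
apply: Rplus_le_compat; first exact: rsum_le.
apply: Rmult_le_compat_l; first lra.
apply: rsum_le => i; apply: rsum_le => j; apply: Rmult_le_compat_l; first exact: W0.
by apply: Rmult_le_compat.
Qed.

Lemma Dmag_argmin_exists a : (forall i, 0 <= a i) ->
  exists r, orthant_argmin (fun r => Dmag beta W r a) r.
Proof.
move=> a0; have sq_sum0 := rsum_ge0 (fun i => pow2_ge_0 (a i)).
(* Beyond this bound one fidelity term [(a k - s k) ^ 2] alone exceeds the fidelity of [s = 0]. *)
apply: (@orthant_argmin_coercive _ _ (rsum a + rsum (fun i => a i ^ 2) + 1)).
- by have := rsum_ge0 a0; lra.
- exact: Dmag_continuous.
move=> s s0 [k Mk]; rewrite /Dmag.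
have fit0 : rsum (fun i => (a i - 0) ^ 2) = rsum (fun i => a i ^ 2).
  by apply: eq_rsum => i; ring.
have fit_s := rsum_ge_term k (fun i => pow2_ge_0 (a i - s i)).
have gap : rsum (fun i => a i ^ 2) + 1 < s k - a k by have := rsum_ge_term k a0; lra.
have far : rsum (fun i => a i ^ 2) <= (a k - s k) ^ 2 by nra.
have pen : Pmag W (fun=> 0) <= Pmag W s by apply: Pmag_le => i; have := s0 i; lra.
have := Rmult_le_compat_l _ _ _ beta0 pen; lra.
Qed.

Lemma Dmag_argmin_zero a r k :
  orthant_argmin (fun r => Dmag beta W r a) r -> a k = 0 -> r k = 0.
Proof.
move=> [r0 r_min] ak0; apply: Rle_antisym (r0 k); apply: Rnot_lt_le => rk_pos.
pose s j := if j == k then 0 else r j.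
have s_r j : 0 <= s j <= r j.
  by rewrite /s; have := r0 j; case: eqP => [->|_]; lra.
have fit : rsum (fun i => (a i - s i) ^ 2) < rsum (fun i => (a i - r i) ^ 2).
  apply: (rsum_lt (k := k)) => [j|]; rewrite /s; last by rewrite eqxx ak0; nra.
  by case: eqP => [->|_]; [rewrite ak0; nra | lra].
have := Rmult_le_compat_l _ _ _ beta0 (Pmag_le s_r).
have := r_min s (fun j => proj1 (s_r j)); rewrite /Dmag; lra.
Qed.

End MagnitudeProblem.

Theorem proposition3 (n : nat) (W : rmat n) (beta : R)
  (HWsym : sym_mat W) (HWnn : nonneg_mat W) (HWdiag : zero_diag W)
  (Hbeta : 0 <= beta) (Hpd : pos_def (id_plus_scale beta W)) (z : cvec n) :
  exists! x : cvec n, forall y : cvec n, DbW beta W x z <= DbW beta W y z.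
Proof.
have [r r_argmin] := Dmag_argmin_exists Hbeta HWnn (a := cmods z) (fun i => cmod_ge0 (z i)).
have r_zero i : cmod (z i) = 0 -> r i = 0 := Dmag_argmin_zero Hbeta HWnn r_argmin.
have [r0 r_min] := r_argmin.
have D_x0 := DbW_cpolar beta W r0 r_zero.
exists (fun i => cpolar (r i) (z i)); split=> [y | x x_min].
  rewrite D_x0; apply: Rle_trans (DbW_ge_Dmag beta W z y).
  by apply: r_min => i; exact: cmod_ge0.
have := x_min (fun i => cpolar (r i) (z i)); rewrite D_x0 => D_x.
have lower := DbW_ge_Dmag beta W z x.
have upper := r_min (cmods x) (fun i => cmod_ge0 (x i)).
have x_r i : cmod (x i) = r i.
  by apply: (Dmag_argmin_unique (c := cmods x) Hpd r_argmin (fun j => cmod_ge0 (x j))); lra.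
have tight : DbW beta W x z <= Dmag beta W (cmods x) (cmods z) by lra.
apply: functional_extensionality => i; rewrite -x_r; symmetry.
apply: cpolar_of_cmod_csub (DbW_le_Dmag_tight tight i) _.
by rewrite x_r; exact: r_zero.
Qed.
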